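(* There exists a character $\varepsilon:G_3\to\{1,-1\}$ such that $\varepsilon(g)=-1$ for every hexflection $g$ and $\varepsilon(-I)=-1$.
   Context: $\zeta=(-1+\sqrt{-3})/2$, $\mathcal{E}=\mathbb{Z}[\zeta]$. On $\mathbb{C}^4$, $h(a,b)=\bar a_1b_2+\bar a_2b_1-\bar a_3b_3-\bar a_4b_4$; $G_3=\{g\in\mathrm{GL}(4,\mathcal{E}):h(ga,gb)=h(a,b)\}$. For $b\in\mathcal{E}^4$ with $h(b,b)=-1$ and $\eta$ a primitive sixth root of unity, the hexflection along $b$ is $x\mapsto x-(1-\eta)\frac{h(b,x)}{h(b,b)}b$, an element of $G_3$ of order $6$ fixing the orthogonal complement of $b$ and sending $b$ to $\eta b$. *)

From HB Require Import structures.
From mathcomp Require Import all_boot all_order all_algebra all_field.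
Set Implicit Arguments. Unset Strict Implicit. Unset Printing Implicit Defensive.
Import Order.TTheory GRing.Theory Num.Theory.
Local Open Scope ring_scope.

Definition zeta : algC := (-1 + sqrtC (-3)) / 2.

Definition eisenstein (x : algC) : Prop :=
  exists a b : int, x = a%:~R + b%:~R * zeta.

Definition mx_over_E m n (A : 'M[algC]_(m, n)) : Prop :=
  forall i j, eisenstein (A i j).

Definition Jh : 'M[algC]_4 :=
  \matrix_(i < 4, j < 4)
    (if ((i == 0 :> nat) && (j == 1 :> nat)) || ((i == 1 :> nat) && (j == 0 :> nat)) then 1
     else if (i == j) && (2 <= i)%N then -1 else 0).

Definition adjC m n (A : 'M[algC]_(m, n)) : 'M[algC]_(n, m) := (map_mx (@Num.conj algC) A)^T.

(* h(a,b) = conj(a1) b2 + conj(a2) b1 - conj(a3) b3 - conj(a4) b4 *)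
Definition hform (a b : 'cV[algC]_4) : algC := (adjC a *m Jh *m b) 0 0.

Definition GL4E (g : 'M[algC]_4) : Prop :=
  mx_over_E g /\ exists g' : 'M[algC]_4,
    mx_over_E g' /\ g *m g' = 1%:M /\ g' *m g = 1%:M.

Definition G3 (g : 'M[algC]_4) : Prop :=
  GL4E g /\ forall a b : 'cV[algC]_4, hform (g *m a) (g *m b) = hform a b.

(* matrix of x |-> x - (1 - eta) h(b,x)/h(b,b) b *)
Definition hexflection (b : 'cV[algC]_4) (eta : algC) : 'M[algC]_4 :=
  1%:M - ((1 - eta) / hform b b) *: (b *m adjC b *m Jh).

Definition is_hexflection (g : 'M[algC]_4) : Prop :=
  exists (b : 'cV[algC]_4) (eta : algC),
    mx_over_E b /\ hform b b = -1 /\ 6.-primitive_root eta /\ g = hexflection b eta.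

From HB Require Import structures.
From mathcomp Require Import all_boot all_order all_algebra all_field all_fingroup.
From mathcomp Require Import ring.
Set Implicit Arguments. Unset Strict Implicit. Unset Printing Implicit Defensive.
Import Order.TTheory GRing.Theory Num.Theory.
Local Open Scope ring_scope.

(* Reduction modulo the prime [1 - zeta] of [E] (residue field F3, with [zeta = 1]
   and complex conjugation becoming trivial) maps [G_3] into the orthogonal group
   of the quadratic form [2 x1 x2 - x3^2 - x4^2] on F3^4.  This group permutes the
   vectors of norm [-1], and [eps g] is the sign of the permutation induced by the
   reduction of [g].  A hexflection reduces to the reflection [x - B(b, x) b] in a
   vector of norm [-1], and [-I] to [-I]; both are involutions, so their sign is
   [(-1)^(m/2)] for [m] moved points, and [m/2] is odd in both cases, as an
   enumeration of F3^4 shows. *)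

Section FinPerm.

Variable T : finType.

Definition perm_of (f : T -> T) : {perm T} := insubd (1%g : {perm T}) [ffun x => f x].

Lemma perm_ofE (f : T -> T) : injective f -> perm_of f =1 f.
Proof.
move=> f_inj x; rewrite -pvalE /perm_of insubdK ?ffunE //.
by apply/injectiveP => y z; rewrite !ffunE => /f_inj.
Qed.

Lemma odd_perm_involution (s : {perm T}) :
  involutive s -> odd_perm s = odd #|[pred x | s x != x]|./2.
Proof.
move=> s_inv; move moved_s: #|_| => n.
elim/ltn_ind: n s s_inv moved_s => n IHn s s_inv moved_s.
case: (posnP n) => [n0 | n_gt0].
  suff -> : s = 1%g by rewrite odd_perm1 n0.
  apply/permP => x; rewrite perm1; apply/eqP/negbNE.
  by move: moved_s; rewrite n0 => /card0_eq/(_ x); rewrite !inE => ->.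
have /card_gt0P[x] : (0 < #|[pred x | s x != x]|)%N by rewrite moved_s.
rewrite inE /= => sx_x.
set y := s x; pose s' := (tperm x y * s)%g.
have s'E z : s' z = if z \in pred2 x y then z else s z.
  rewrite permM !inE; have [->|zx] := eqVneq z x; first by rewrite tpermL s_inv.
  have [->|zy] := eqVneq z y; first by rewrite tpermR.
  by rewrite tpermD // eq_sym.
have s'_inv : involutive s'.
  move=> z; rewrite [s' z]s'E; case: ifPn => [zxy|]; first by rewrite s'E zxy.
  rewrite !inE => /norP[zx zy]; rewrite s'E ifN ?s_inv // !inE; apply/norP; split.
    by apply: contra zy => /eqP sz; rewrite /y -sz s_inv.
  by apply: contra zx => /eqP/perm_inj ->.
have moved_s' : #|[pred z | s z != z]| = #|[pred z | s' z != z]|.+2.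
  rewrite (cardD1 x [pred z | s z != z]) (cardD1 y [predD1 [pred z | s z != z] & x]).
  rewrite !inE /= sx_x /y s_inv eq_sym sx_x.
  congr _.+2; apply: eq_card => z; rewrite !inE s'E !inE.
  rewrite /y; have [->|zx] := eqVneq z x; first by rewrite !eqxx /= andbF.
  by have [->|zy] := eqVneq z (s x); rewrite ?eqxx ?orbT //= (negbTE zx) /= andbT.
have -> : s = (tperm x y * s')%g by rewrite mulgA tperm2 mul1g.
rewrite odd_mul_tperm (IHn _ _ s' s'_inv erefl); last by rewrite -moved_s moved_s'.
by rewrite -moved_s moved_s' /= eq_sym sx_x.
Qed.

End FinPerm.

Local Notation F3 := 'Z_3.

Definition V := (F3 * F3 * F3 * F3)%type.

Definition F3_enum : seq F3 := [:: 0; 1; 2].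

(* [#|_|] does not evaluate under [vm_compute], so counts over [V] go through an
   explicit enumeration. *)
Definition V_enum : seq V :=
  [seq (x, d) | x <- [seq (x, c) | x <- [seq (a, b) | a <- F3_enum, b <- F3_enum],
                                   c <- F3_enum], d <- F3_enum].

Lemma mem_F3_enum (a : F3) : a \in F3_enum.
Proof. by case: a => [[|[|[|n]]] ?]. Qed.

Lemma mem_V_enum (x : V) : x \in V_enum.
Proof. by case: x => [[[a b] c] d]; rewrite !(allpairs_f, mem_F3_enum). Qed.

Lemma card_V_enum (P : pred V) : #|P| = count P V_enum.
Proof.
have uniq_V_enum : uniq V_enum by vm_compute.
rewrite -size_filter -(card_uniqP _) ?filter_uniq //.
by apply: eq_card => x; rewrite mem_filter mem_V_enum andbT.
Qed.

Definition col_of (x : V) : 'cV[F3]_4 :=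
  \col_i (let: (a, b, c, d) := x in [:: a; b; c; d]`_i).

Definition of_col (c : 'cV[F3]_4) : V :=
  (c (inord 0) 0, c (inord 1) 0, c (inord 2) 0, c (inord 3) 0).

Lemma of_colK : cancel of_col col_of.
Proof.
move=> c; apply/matrixP => i j; rewrite !mxE (ord1 j).
by case: i => [[|[|[|[|n]]]] ?] //=; congr (c _ _); apply: val_inj; rewrite /= inordK.
Qed.

Lemma col_ofK : cancel col_of of_col.
Proof. by case=> [[[a b] c] d]; rewrite /of_col !mxE !inordK. Qed.

Definition J3 : 'M[F3]_4 :=
  \matrix_(i < 4, j < 4)
    (if ((i == 0 :> nat) && (j == 1 :> nat)) || ((i == 1 :> nat) && (j == 0 :> nat)) then 1
     else if (i == j) && (2 <= i)%N then -1 else 0).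

Lemma trmx_J3 : J3^T = J3.
Proof.
by apply/matrixP => i j; rewrite !mxE; case: i j => [[|[|[|[|?]]]] ?] [[|[|[|[|?]]]] ?].
Qed.

Definition qf3 (c : 'cV[F3]_4) : F3 := (c^T *m J3 *m c) 0 0.

Definition bform (x y : V) : F3 :=
  let: (x0, x1, x2, x3) := x in let: (y0, y1, y2, y3) := y in
  x0 * y1 + x1 * y0 - x2 * y2 - x3 * y3.

Definition qform (x : V) : F3 := bform x x.

Lemma bformE (x y : V) : ((col_of x)^T *m J3 *m col_of y) 0 0 = bform x y.
Proof.
case: x => [[[x0 x1] x2] x3]; case: y => [[[y0 y1] y2] y3].
rewrite !mxE !big_ord_recl big_ord0 /= !mxE !big_ord_recl !big_ord0 /= !mxE /=.
ring.
Qed.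

Lemma qf3E (x : V) : qf3 (col_of x) = qform x.
Proof. exact: bformE. Qed.

Definition isometry3 (M : 'M[F3]_4) : Prop := M^T *m J3 *m M = J3.

Definition mxact (M : 'M[F3]_4) (x : V) : V := of_col (M *m col_of x).

Lemma mxactM (M N : 'M[F3]_4) x : mxact (M *m N) x = mxact M (mxact N x).
Proof. by rewrite /mxact of_colK mulmxA. Qed.

Lemma qform_mxact (M : 'M[F3]_4) x : isometry3 M -> qform (mxact M x) = qform x.
Proof.
move=> isoM; rewrite -!qf3E of_colK /qf3 trmx_mul; set c := col_of x.
by rewrite -[in RHS]isoM !mulmxA.
Qed.

Definition sphere_act (M : 'M[F3]_4) (x : V) : V :=
  if qform x == -1 then mxact M x else x.

Lemma sphere_actM (M N : 'M[F3]_4) x :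
  isometry3 N -> sphere_act (M *m N) x = sphere_act M (sphere_act N x).
Proof.
by move=> isoN; rewrite /sphere_act; case: ifP => nx; rewrite ?qform_mxact // nx // mxactM.
Qed.

Lemma sphere_act_inj (M M' : 'M[F3]_4) :
  isometry3 M -> M' *m M = 1%:M -> injective (sphere_act M).
Proof.
move=> isoM MK; apply: (@can_inj _ _ _ (sphere_act M')) => x.
by rewrite -sphere_actM // MK /sphere_act /mxact mul1mx col_ofK if_same.
Qed.

Definition sphere_sign (M : 'M[F3]_4) : bool := odd_perm (perm_of (sphere_act M)).

Lemma sphere_signM (M N M' N' : 'M[F3]_4) :
  isometry3 M -> isometry3 N -> M' *m M = 1%:M -> N' *m N = 1%:M ->
  sphere_sign (M *m N) = sphere_sign M (+) sphere_sign N.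
Proof.
move=> isoM isoN MK NK; have Minj := sphere_act_inj isoM MK.
have Ninj := sphere_act_inj isoN NK.
have MNinj : injective (sphere_act (M *m N)).
  by move=> x y; rewrite !sphere_actM // => /Minj/Ninj.
rewrite /sphere_sign addbC -odd_permM; congr odd_perm; apply/permP => x.
by rewrite permM !perm_ofE // sphere_actM.
Qed.

Lemma sphere_sign_involution (M : 'M[F3]_4) (f : V -> V) :
  isometry3 M -> M *m M = 1%:M -> mxact M =1 f ->
  sphere_sign M = odd (count (fun x => (qform x == -1) && (f x != x)) V_enum)./2.
Proof.
move=> isoM MM Mf; have act_inv : involutive (sphere_act M).
  by move=> x; rewrite -sphere_actM // MM /sphere_act /mxact mul1mx col_ofK if_same.
have act_perm := perm_ofE (can_inj act_inv).
rewrite /sphere_sign odd_perm_involution => [|x]; last by rewrite !act_perm.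
rewrite card_V_enum; congr (odd _./2); apply: eq_count => x.
by rewrite inE /= act_perm /sphere_act Mf; case: ifP; rewrite ?eqxx.
Qed.

Lemma three_F3 : 3%:R = 0 :> F3.
Proof. by apply/eqP. Qed.

Definition refl3 (c : 'cV[F3]_4) : 'M[F3]_4 := 1%:M - c *m c^T *m J3.

Lemma refl3_involutive (c : 'cV[F3]_4) : qf3 c = -1 -> refl3 c *m refl3 c = 1%:M.
Proof.
move=> qc; set X := c *m c^T *m J3.
have XX : X *m X = - X.
  rewrite /X -!mulmxA (mulmxA c^T) (mulmxA (c^T *m J3)) [c^T *m J3 *m c]mx11_scalar.
  by rewrite [(_ *m c) 0 0]qc mul_scalar_mx scaleN1r mulmxN.
rewrite /refl3 -/X mulmxBl mul1mx mulmxBr mulmx1 XX opprK -addrA -opprD.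
by rewrite -[X + X]mulr2n -mulrS -scaler_nat three_F3 scale0r subr0.
Qed.

Lemma refl3_isometry (c : 'cV[F3]_4) : qf3 c = -1 -> isometry3 (refl3 c).
Proof.
move=> qc; rewrite /isometry3; have -> : (refl3 c)^T *m J3 = J3 *m refl3 c.
  rewrite /refl3 linearB /= trmx1 !trmx_mul trmxK trmx_J3.
  by rewrite mulmxBl mulmxBr mul1mx mulmx1 !mulmxA.
by rewrite -mulmxA refl3_involutive // mulmx1.
Qed.

Definition negV (x : V) : V := let: (a, b, c, d) := x in (- a, - b, - c, - d).

Definition reflV (b x : V) : V :=
  let s := bform b x in
  let: (b0, b1, b2, b3) := b in let: (x0, x1, x2, x3) := x in
  (x0 - s * b0, x1 - s * b1, x2 - s * b2, x3 - s * b3).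

Lemma mxact_neg1 : mxact (- 1%:M) =1 negV.
Proof. by case=> [[[a b] c] d]; rewrite /mxact mulNmx mul1mx /of_col !mxE !inordK. Qed.

Lemma mxact_refl3 (b : V) : mxact (refl3 (col_of b)) =1 reflV b.
Proof.
move=> x; rewrite /mxact /refl3 mulmxBl mul1mx -!mulmxA (mulmxA _ J3).
rewrite [_ *m col_of x]mx11_scalar bformE mul_mx_scalar.
by case: x => [[[x0 x1] x2] x3]; case: b => [[[b0 b1] b2] b3]; rewrite /of_col !mxE !inordK.
Qed.

Lemma neg1_moved_count :
  odd (count (fun x => (qform x == -1) && (negV x != x)) V_enum)./2.
Proof. by vm_compute. Qed.

Lemma reflV_moved_count : all (fun b => (qform b == -1) ==>
  odd (count (fun x => (qform x == -1) && (reflV b x != x)) V_enum)./2) V_enum.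
Proof. by vm_compute. Qed.

Lemma sphere_sign_neg1 : sphere_sign (- 1%:M).
Proof.
have neg1_sq : (- 1%:M) *m (- 1%:M) = 1%:M :> 'M[F3]_4.
  by rewrite mulNmx mulmxN opprK mul1mx.
have neg1_iso : isometry3 (- 1%:M).
  rewrite /isometry3.
  have -> : (- 1%:M : 'M[F3]_4)^T = - 1%:M by apply/matrixP => i j; rewrite !mxE eq_sym.
  by rewrite mulNmx mulmxN mulNmx opprK mul1mx mulmx1.
by rewrite (sphere_sign_involution neg1_iso neg1_sq mxact_neg1) neg1_moved_count.
Qed.

Lemma sphere_sign_refl3 (c : 'cV[F3]_4) : qf3 c = -1 -> sphere_sign (refl3 c).
Proof.
rewrite -(of_colK c) qf3E; move: (of_col c) => b qb.
have qc : qf3 (col_of b) = -1 by rewrite qf3E.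
rewrite (sphere_sign_involution (refl3_isometry qc) (refl3_involutive qc) (mxact_refl3 b)).
by move: reflV_moved_count => /allP/(_ b (mem_V_enum b)); rewrite qb eqxx.
Qed.

Lemma zeta_root : zeta ^+ 2 + zeta + 1 = 0.
Proof.
have sqrtCN3 : sqrtC (-3) ^+ 2 = -3 :> algC by rewrite sqrtCK.
rewrite /zeta.
have -> : ((-1 + sqrtC (-3)) / 2) ^+ 2 + (-1 + sqrtC (-3)) / 2 + 1
  = (sqrtC (-3) ^+ 2 + 3) / 4 :> algC by field.
by rewrite sqrtCN3 addNr mul0r.
Qed.

Lemma zeta_sqr : zeta ^+ 2 = - 1 - zeta.
Proof. by rewrite -[RHS]addr0 -zeta_root; ring. Qed.

Lemma conj_zeta : zeta^* = - 1 - zeta.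
Proof.
pose s : algC := sqrtC (-3).
have s_sqr : s ^+ 2 = -3 by rewrite sqrtCK.
have conj_s : s^* = - s.
  have : (s^* - s) * (s^* + s) = 0.
    have -> : (s^* - s) * (s^* + s) = s^* ^+ 2 - s ^+ 2 by ring.
    by rewrite -rmorphXn s_sqr rmorphN rmorph_nat subrr.
  move/eqP; rewrite mulf_eq0 subr_eq0 addr_eq0 => /orP[/eqP s_real|/eqP //].
  have : 0 <= s ^+ 2 by rewrite real_exprn_even_ge0 //; apply/CrealP.
  by rewrite s_sqr oppr_ge0 lern0.
by rewrite /zeta -/s fmorph_div rmorphD rmorphN rmorph1 /= conj_s rmorph_nat; field.
Qed.

Lemma eisenstein_coordM (a b c d : int) :
  (a%:~R + b%:~R * zeta) * (c%:~R + d%:~R * zeta)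
  = (a * c - b * d)%:~R + (a * d + b * c - b * d)%:~R * zeta :> algC.
Proof.
rewrite !(intrD, intrB, intrM).
transitivity (a%:~R * c%:~R + (a%:~R * d%:~R + b%:~R * c%:~R) * zeta
              + b%:~R * d%:~R * zeta ^+ 2 : algC); first by ring.
by rewrite zeta_sqr; ring.
Qed.

Lemma eisenstein_coord_conj (a b : int) :
  (a%:~R + b%:~R * zeta)^* = (a - b)%:~R + (- b)%:~R * zeta :> algC.
Proof. by rewrite rmorphD rmorphM /= !rmorph_int conj_zeta intrB intrN; ring. Qed.

Lemma intr_F3_mod3 (m n k : int) : m = n + k * 3%:R -> m%:~R = n%:~R :> F3.
Proof. by move=> ->; rewrite intrD intrM rmorph_nat three_F3 mulr0 addr0. Qed.

(* For [x = a + b zeta] we have [x + x^* = 2a - b = -(a + b) mod 3]: [red] is the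
   reduction of E modulo its prime [1 - zeta], whose residue field is F3. *)
Definition red (x : algC) : F3 := (- Num.floor (x + x^*))%:~R.

Lemma redE (a b : int) : red (a%:~R + b%:~R * zeta) = (a + b)%:~R.
Proof.
rewrite /red eisenstein_coord_conj.
have -> : a%:~R + b%:~R * zeta + ((a - b)%:~R + (- b)%:~R * zeta)
          = (2 * a - b)%:~R :> algC.
  by rewrite !(intrB, intrM, intrN); ring.
by rewrite intrKfloor; apply: (@intr_F3_mod3 _ _ (- a)); ring.
Qed.

Lemma eisenstein_int (n : int) : eisenstein n%:~R.
Proof. by exists n, 0; rewrite mul0r addr0. Qed.

Lemma red_int (n : int) : red n%:~R = n%:~R.
Proof. by move: (redE n 0); rewrite mulr0z mul0r !addr0. Qed.

Lemma eisenstein_nat (n : nat) : eisenstein n%:R.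
Proof. by rewrite pmulrn; apply: eisenstein_int. Qed.

Lemma red_nat (n : nat) : red n%:R = n%:R.
Proof. by rewrite !pmulrn red_int. Qed.

Lemma red0 : red 0 = 0.
Proof. by move: (red_int 0); rewrite !mulr0z. Qed.

Lemma red1 : red 1 = 1.
Proof. by move: (red_int 1); rewrite !mulr1z. Qed.

Lemma redN1 : red (-1) = -1.
Proof. by move: (red_int (-1)); rewrite !mulrN1z. Qed.

Section EisensteinArith.

Variables x y : algC.
Hypotheses (Ex : eisenstein x) (Ey : eisenstein y).

Lemma eisensteinD : eisenstein (x + y).
Proof.
case: Ex Ey => [a [b ->]] [c [d ->]]; exists (a + c), (b + d).
by rewrite !intrD; ring.
Qed.

Lemma redD : red (x + y) = red x + red y.
Proof.
case: Ex Ey => [a [b ->]] [c [d ->]].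
have -> : a%:~R + b%:~R * zeta + (c%:~R + d%:~R * zeta)
          = (a + c)%:~R + (b + d)%:~R * zeta :> algC.
  by rewrite !intrD; ring.
by rewrite !redE !intrD; ring.
Qed.

Lemma eisensteinM : eisenstein (x * y).
Proof.
by case: Ex Ey => [a [b ->]] [c [d ->]]; rewrite eisenstein_coordM; eexists; eexists.
Qed.

Lemma redM : red (x * y) = red x * red y.
Proof.
case: Ex Ey => [a [b ->]] [c [d ->]]; rewrite eisenstein_coordM !redE -intrM.
by apply: (@intr_F3_mod3 _ _ (- (b * d))); ring.
Qed.

Lemma eisenstein_conj : eisenstein x^*.
Proof. by case: Ex => [a [b ->]]; rewrite eisenstein_coord_conj; eexists; eexists. Qed.

Lemma red_conj : red x^* = red x.
Proof.
case: Ex => [a [b ->]]; rewrite eisenstein_coord_conj !redE.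
by apply: (@intr_F3_mod3 _ _ (- b)); ring.
Qed.

End EisensteinArith.

Lemma eisensteinN (x : algC) : eisenstein x -> eisenstein (- x).
Proof.
by move=> Ex; rewrite -mulN1r; apply: eisensteinM => //; exact: (eisenstein_int (-1)).
Qed.

Lemma redN (x : algC) : eisenstein x -> red (- x) = - red x.
Proof.
move=> Ex; rewrite -mulN1r redM ?redN1 ?mulN1r //; exact: (eisenstein_int (-1)).
Qed.

Lemma eisenstein_sum (I : finType) (f : I -> algC) :
  (forall i, eisenstein (f i)) -> eisenstein (\sum_i f i).
Proof.
by move=> Ef; apply: big_ind => //; [exact: (eisenstein_int 0) | exact: eisensteinD].
Qed.

Lemma red_sum (I : finType) (f : I -> algC) :
  (forall i, eisenstein (f i)) -> red (\sum_i f i) = \sum_i red (f i).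
Proof.
move=> Ef; pose P x y := eisenstein x /\ red x = y.
suff [] : P (\sum_i f i) (\sum_i red (f i)) by [].
apply: big_ind2 => [|x1 y1 x2 y2 [Ex1 <-] [Ex2 <-]|i _]; rewrite /P.
- by rewrite red0; split=> //; exact: (eisenstein_int 0).
- by rewrite redD //; split=> //; apply: eisensteinD.
- by [].
Qed.

Section ReductionMx.

Variables m n p : nat.

Lemma mx_over_E_mul (A : 'M[algC]_(m, n)) (B : 'M[algC]_(n, p)) :
  mx_over_E A -> mx_over_E B -> mx_over_E (A *m B).
Proof. by move=> EA EB i j; rewrite mxE; apply: eisenstein_sum => k; apply: eisensteinM. Qed.

Lemma red_mulmx (A : 'M[algC]_(m, n)) (B : 'M[algC]_(n, p)) :
  mx_over_E A -> mx_over_E B -> map_mx red (A *m B) = map_mx red A *m map_mx red B.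
Proof.
move=> EA EB; apply/matrixP => i j; rewrite !mxE red_sum => [|k]; last exact: eisensteinM.
by apply: eq_bigr => k _; rewrite redM // !mxE.
Qed.

Lemma mx_over_E_adjC (A : 'M[algC]_(m, n)) : mx_over_E A -> mx_over_E (adjC A).
Proof. by move=> EA i j; rewrite !mxE; apply: eisenstein_conj. Qed.

Lemma red_adjC (A : 'M[algC]_(m, n)) :
  mx_over_E A -> map_mx red (adjC A) = (map_mx red A)^T.
Proof. by move=> EA; apply/matrixP => i j; rewrite !mxE red_conj. Qed.

End ReductionMx.

Lemma mx_over_E_Jh : mx_over_E Jh.
Proof.
move=> i j; rewrite mxE; case: ifP => _; first exact: (eisenstein_int 1).
by case: ifP => _; [exact: (eisenstein_int (-1)) | exact: (eisenstein_int 0)].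
Qed.

Lemma red_Jh : map_mx red Jh = J3.
Proof.
apply/matrixP => i j; rewrite !mxE; case: ifP => _; first exact: red1.
by case: ifP => _; rewrite ?redN1 ?red0.
Qed.

Lemma red_hform (a b : 'cV[algC]_4) : mx_over_E a -> mx_over_E b ->
  red (hform a b) = ((map_mx red a)^T *m J3 *m map_mx red b) 0 0.
Proof.
move=> Ea Eb; have EaJ := mx_over_E_mul (mx_over_E_adjC Ea) mx_over_E_Jh.
have -> : red (hform a b) = map_mx red (adjC a *m Jh *m b) 0 0 by rewrite mxE.
rewrite (red_mulmx EaJ Eb) (red_mulmx (mx_over_E_adjC Ea) mx_over_E_Jh).
by rewrite red_adjC // red_Jh.
Qed.

Lemma red_1mx n : map_mx red (1%:M : 'M[algC]_n) = 1%:M.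
Proof. by apply/matrixP => i j; rewrite !mxE; case: eqP; rewrite ?red1 ?red0. Qed.

Lemma red_N1mx n : map_mx red (- 1%:M : 'M[algC]_n) = - 1%:M.
Proof.
by apply/matrixP => i j; rewrite !mxE; case: eqP; rewrite ?oppr0 ?redN1 ?red0.
Qed.

Lemma adjC_mulmx m n p (A : 'M[algC]_(m, n)) (B : 'M[algC]_(n, p)) :
  adjC (A *m B) = adjC B *m adjC A.
Proof. by rewrite /adjC map_mxM trmx_mul. Qed.

Lemma sesqui_form_inj n (M N : 'M[algC]_n) :
  (forall a b : 'cV_n, (adjC a *m M *m b) 0 0 = (adjC a *m N *m b) 0 0) -> M = N.
Proof.
move=> MN; apply/matrixP => i j; have := MN (delta_mx i 0) (delta_mx j 0).
have adjC_delta k : adjC (delta_mx k 0 : 'cV[algC]_n) = delta_mx 0 k.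
  by apply/matrixP => r s; rewrite !mxE rmorph_nat andbC.
by rewrite !adjC_delta -!rowE -!colE !mxE.
Qed.

Lemma G3_gram (g : 'M[algC]_4) : G3 g -> adjC g *m Jh *m g = Jh.
Proof.
case=> _ g_iso; apply: sesqui_form_inj => a b.
by move: (g_iso a b); rewrite /hform adjC_mulmx !mulmxA.
Qed.

Lemma G3_red_isometry (g : 'M[algC]_4) : G3 g -> isometry3 (map_mx red g).
Proof.
move=> Gg; have Eg := Gg.1.1.
have EgJ := mx_over_E_mul (mx_over_E_adjC Eg) mx_over_E_Jh.
rewrite /isometry3 -red_adjC // -red_Jh -(red_mulmx (mx_over_E_adjC Eg) mx_over_E_Jh).
by rewrite -(red_mulmx EgJ Eg) G3_gram.
Qed.

Lemma G3_red_left_inverse (g : 'M[algC]_4) :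
  G3 g -> exists g3, g3 *m map_mx red g = 1%:M.
Proof.
case=> [[Eg [g' [Eg' [_ g'g]]]] _]; exists (map_mx red g').
by rewrite -red_mulmx // g'g red_1mx.
Qed.

Lemma primitive6_root_cases (eta : algC) :
  6.-primitive_root eta -> eta = - zeta \/ eta = 1 + zeta.
Proof.
move=> eta6; have eta_ne1 k : (0 < k < 6)%N -> eta ^+ k != 1.
  by case/andP=> k_gt0 k_lt6; rewrite -(prim_order_dvd eta6) gtnNdvd.
have eta3 : eta ^+ 3 + 1 = 0.
  have : (eta ^+ 3 - 1) * (eta ^+ 3 + 1) = 0.
    transitivity (eta ^+ 6 - 1); first by ring.
    by rewrite (prim_expr_order eta6) subrr.
  by move/eqP; rewrite mulf_eq0 subr_eq0 (negbTE (eta_ne1 3%N isT)) => /eqP.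
have eta_neN1 : eta + 1 != 0.
  by apply: contra (eta_ne1 2%N isT); rewrite addr_eq0 => /eqP ->; rewrite sqrrN expr1n.
have : (eta + 1) * ((eta + zeta) * (eta - 1 - zeta)) = 0.
  transitivity (eta ^+ 3 + 1 - (eta + 1) * (zeta ^+ 2 + zeta + 1)); first by ring.
  by rewrite eta3 zeta_root mulr0 subr0.
move/eqP; rewrite !mulf_eq0 (negbTE eta_neN1) /= addr_eq0 -addrA -opprD subr_eq0.
by case/orP=> /eqP; [left | right].
Qed.

Lemma red_primitive6_root (eta : algC) :
  6.-primitive_root eta -> eisenstein eta /\ red eta = -1.
Proof.
case/primitive6_root_cases=> ->.
  have -> : - zeta = 0%:~R + (-1)%:~R * zeta :> algC.
    by rewrite mulrN1z mulN1r mulr0z add0r.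
  by rewrite redE; split; [exists 0, (-1) | apply/eqP].
have -> : 1 + zeta = 1%:~R + 1%:~R * zeta :> algC by rewrite mulr1z mul1r.
by rewrite redE; split; [exists 1, 1 | apply/eqP].
Qed.

Lemma red_hexflection (b : 'cV[algC]_4) (eta : algC) :
  mx_over_E b -> hform b b = -1 -> 6.-primitive_root eta ->
  map_mx red (hexflection b eta) = refl3 (map_mx red b).
Proof.
move=> Eb bb eta6; have [Eeta reta] := red_primitive6_root eta6.
have Es : eisenstein (eta - 1) by apply: eisensteinD => //; exact: (eisenstein_int (-1)).
(* [eta] reduces to [-1], so the coefficient [(1 - eta) / h(b, b) = eta - 1] reduces to [1]. *)
have rs : red (eta - 1) = 1.
  by rewrite redD ?reta ?redN1 //; [apply/eqP | exact: (eisenstein_int (-1))].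
have Ebb : mx_over_E (b *m adjC b) := mx_over_E_mul Eb (mx_over_E_adjC Eb).
set X := b *m adjC b *m Jh; have EX : mx_over_E X := mx_over_E_mul Ebb mx_over_E_Jh.
rewrite /refl3; have -> : map_mx red b *m (map_mx red b)^T *m J3 = map_mx red X.
  rewrite /X (red_mulmx Ebb mx_over_E_Jh) (red_mulmx Eb (mx_over_E_adjC Eb)).
  by rewrite red_adjC // red_Jh.
rewrite /hexflection -/X bb invrN1 mulrN1 opprB; move: X EX => X EX.
apply/matrixP => i j; rewrite !mxE.
have EsX : eisenstein ((eta - 1) * X i j) := eisensteinM Es (EX i j).
rewrite redD ?redN ?redM ?rs ?mul1r ?red_nat //; [exact: eisenstein_nat | exact: eisensteinN].
Qed.

Theorem lemma8p6 :
  exists eps : 'M[algC]_4 -> int,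
    (forall g, G3 g -> eps g = 1 \/ eps g = -1) /\
    (forall g k, G3 g -> G3 k -> eps (g *m k) = eps g * eps k) /\
    (forall g, is_hexflection g -> eps g = -1) /\
    eps (- 1%:M) = -1.
Proof.
exists (fun g => if sphere_sign (map_mx red g) then -1 else 1).
split; [|split; [|split]].
- by move=> g _; case: sphere_sign; [right | left].
- move=> g k Gg Gk; have [g3 g3K] := G3_red_left_inverse Gg.
  have [k3 k3K] := G3_red_left_inverse Gk.
  rewrite (red_mulmx Gg.1.1 Gk.1.1).
  rewrite (sphere_signM (G3_red_isometry Gg) (G3_red_isometry Gk) g3K k3K).
  by case: sphere_sign; case: sphere_sign; rewrite ?mulN1r ?mul1r.
- move=> _ [b [eta [Eb [bb [eta6 ->]]]]]; rewrite red_hexflection // sphere_sign_refl3 //.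
  by rewrite /qf3 -red_hform // bb redN1.
- by rewrite red_N1mx sphere_sign_neg1.
Qed.
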